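(* There exists a universal constant $c>0$ such that the following holds. Let $k$ and $n$ be positive integers with $k>n$. For every $\mathbf{y}=y_1\ldots y_k\in\{0,1\}^k$, let $\rho(\mathbf{y})$ be an $n$-qubit density matrix. Suppose there exist Hermitian operators $O_1,\ldots,O_k$ on $n$ qubits, real numbers $\alpha_1,\ldots,\alpha_k$ and $\gamma>0$ such that for all $\mathbf{y}\in\{0,1\}^k$ and all $i\in\{1,\ldots,k\}$: (i) if $y_i=0$ then $\operatorname{Tr}[\rho(\mathbf{y})O_i]\le \alpha_i-\gamma$, and (ii) if $y_i=1$ then $\operatorname{Tr}[\rho(\mathbf{y})O_i]\ge \alpha_i+\gamma$. Let $\|O\|_\infty:=\max_i\|O_i\|_\infty$. Then $n\,\|O\|_\infty^2/\gamma^2\ \ge\ c\,k$, i.e. $n\|O\|_\infty^2/\gamma^2\in\Omega(k)$.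
   Context: $\|A\|_\infty$ denotes the spectral norm (largest absolute eigenvalue) of a Hermitian operator $A$. An $n$-qubit density matrix is a positive semidefinite, unit-trace operator on $(\mathbb{C}^2)^{\otimes n}$. *)

From HB Require Import structures.
From mathcomp Require Import all_boot all_order all_algebra.
From mathcomp Require Import complex.
From mathcomp Require Import reals.
Set Implicit Arguments. Unset Strict Implicit. Unset Printing Implicit Defensive.
Import Order.TTheory GRing.Theory Num.Theory.
Local Open Scope ring_scope.
Local Open Scope complex_scope.

Definition adjmx (R : realType) (m n : nat) (A : 'M[R[i]]_(m, n))
  : 'M[R[i]]_(n, m) := (map_mx Num.conj A)^T.

Definition is_hermitian (R : realType) (d : nat) (A : 'M[R[i]]_d) : Prop :=
  adjmx A = A.

Definition psd (R : realType) (d : nat) (A : 'M[R[i]]_d) : Prop :=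
  is_hermitian A /\ forall v : 'cV[R[i]]_d, 0 <= (adjmx v *m A *m v) 0 0.

(* n-qubit density matrix: PSD, unit trace, on (C^2)^{\otimes n} = C^(2^n) *)
Definition density_matrix (R : realType) (n : nat) (A : 'M[R[i]]_(2 ^ n))
  : Prop := psd A /\ \tr A = 1.

Definition is_spec_norm (R : realType) (d : nat) (A : 'M[R[i]]_d) (r : R)
  : Prop :=
  (exists a, eigenvalue A a /\ `|a| = r%:C) /\
  (forall a, eigenvalue A a -> `|a| <= r%:C).

From HB Require Import structures.
From mathcomp Require Import all_boot all_order all_algebra.
From mathcomp Require Import complex.
From mathcomp Require Import reals.
From mathcomp Require Import spectral sesquilinear zify ring lra.
Set Implicit Arguments. Unset Strict Implicit. Unset Printing Implicit Defensive.
Import Order.TTheory GRing.Theory Num.Theory.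
Local Open Scope ring_scope.

(* Write M_y = \sum_i (-1)^(1 - y_i) (O_i - alpha_i) for a sign pattern y.  The state
   rho(y) witnesses tr(rho(y) M_y) >= k gamma; iterating (tr rho X)^2 <= tr(rho X^2) and
   using tr(rho Y^2) <= tr(Y^2) gives tr(M_y^(2q)) >= (k gamma)^(2q) for q a power of two.
   Averaging over y instead, the expansion of M_y^(2q) into words in the O_i - alpha_i
   has nonnegative sign weights, so the average of tr(M_y^(2q)) is at most
   2^n (2 |O|)^(2q) times the 2q-th moment of a sum of k random signs, which is at most
   (2qk)^q.  Comparing both bounds with q ~ n gives k gamma^2 <= 16 q |O|^2 <= 32 n |O|^2. *)

Section Adjoint.
Variable C : numClosedFieldType.

(* At [C := R[i]] these are [adjmx] and [is_hermitian], and [density] below is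
   [density_matrix], all up to conversion. *)
Definition adj m n (A : 'M[C]_(m, n)) : 'M[C]_(n, m) := (map_mx Num.conj A)^T.
Definition herm d (A : 'M[C]_d) := adj A = A.

Lemma adjE m n (A : 'M[C]_(m, n)) i j : adj A i j = (A j i)^*.
Proof. by rewrite !mxE. Qed.

Lemma adjK m n (A : 'M[C]_(m, n)) : adj (adj A) = A.
Proof. by apply/matrixP=> i j; rewrite !adjE conjCK. Qed.

Lemma adjM m n p (A : 'M[C]_(m, n)) (B : 'M[C]_(n, p)) :
  adj (A *m B) = adj B *m adj A.
Proof. by rewrite /adj map_mxM trmx_mul. Qed.

Lemma adjD m n (A B : 'M[C]_(m, n)) : adj (A + B) = adj A + adj B.
Proof. by apply/matrixP=> i j; rewrite !mxE rmorphD. Qed.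

Lemma adjZ m n a (A : 'M[C]_(m, n)) : adj (a *: A) = a^* *: adj A.
Proof. by apply/matrixP=> i j; rewrite !mxE rmorphM. Qed.

Lemma adj_scalar d a : adj (a%:M : 'M[C]_d) = (a^*)%:M.
Proof. by apply/matrixP=> i j; rewrite !mxE eq_sym rmorphMn. Qed.

Lemma adj_sum d I (r : seq I) (P : pred I) (F : I -> 'M[C]_d) :
  adj (\sum_(i <- r | P i) F i) = \sum_(i <- r | P i) adj (F i).
Proof.
elim/big_rec2: _ => [|i x y _ <-]; last by rewrite adjD.
by apply/matrixP=> i j; rewrite !mxE conjC0.
Qed.

Lemma adj_tstar m n (A : 'M[C]_(m, n)) : (A ^t Num.conj)%sesqui = adj A.
Proof. by apply/matrixP=> i j; rewrite !mxE. Qed.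

Lemma mxtrace_adj d (A : 'M[C]_d) : \tr (adj A) = (\tr A)^*.
Proof.
rewrite /adj mxtrace_tr /mxtrace rmorph_sum.
by apply: eq_bigr => i _; rewrite mxE.
Qed.

Lemma hermD d (A B : 'M[C]_d) : herm A -> herm B -> herm (A + B).
Proof. by rewrite /herm adjD => -> ->. Qed.

Lemma hermZ d a (A : 'M[C]_d) : a \is Num.real -> herm A -> herm (a *: A).
Proof. by rewrite /herm adjZ CrealE => /eqP -> ->. Qed.

Lemma herm_scalar d a : a \is Num.real -> herm (a%:M : 'M[C]_d).
Proof. by rewrite /herm adj_scalar CrealE => /eqP ->. Qed.

Lemma hermB_scalar d a (A : 'M[C]_d) :
  a \is Num.real -> herm A -> herm (A - a%:M).
Proof.
move=> ra hA; apply: hermD => //; rewrite -scaleN1r.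
by apply: hermZ; [rewrite realN real1 | exact: herm_scalar].
Qed.

Lemma herm_sum d I (r : seq I) (P : pred I) (F : I -> 'M[C]_d) :
  (forall i, P i -> herm (F i)) -> herm (\sum_(i <- r | P i) F i).
Proof. by move=> hF; rewrite /herm adj_sum; apply: eq_bigr. Qed.

Lemma hermX d (A : 'M[C]_d) m : herm A -> herm (A ^+ m).
Proof.
move=> hA; elim: m => [|m IH]; first by rewrite expr0; apply/herm_scalar/real1.
by rewrite exprS /herm -mulmxE adjM IH hA mulmxE -exprSr exprS.
Qed.

Lemma mxtrace_herm_mul_real d (A B : 'M[C]_d) :
  herm A -> herm B -> \tr (A *m B) \is Num.real.
Proof. by move=> hA hB; rewrite CrealE -mxtrace_adj adjM hA hB mxtrace_mulC. Qed.

End Adjoint.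

Section Density.
Variables (C : numClosedFieldType) (d : nat).
Implicit Types (A B P rho X : 'M[C]_d).

Definition psdmx rho :=
  herm rho /\ forall v : 'cV[C]_d, 0 <= (adj v *m rho *m v) 0 0.
Definition density rho := psdmx rho /\ \tr rho = 1.
Definition unitary P := P *m adj P = 1%:M.
Definition eigen_norm_le A (c : C) := forall a, eigenvalue A a -> `|a| <= c.

Lemma eigenvalue_shift A a b : eigenvalue (A - a%:M) b -> eigenvalue A (b + a).
Proof.
move/eigenvalueP=> [v vA v_nz]; apply/eigenvalueP; exists v => //.
by move/eqP: vA; rewrite mulmxBr mul_mx_scalar subr_eq scalerDl => /eqP.
Qed.

Lemma eigen_norm_le_shift A c a :
  eigen_norm_le A c -> eigen_norm_le (A - a%:M) (c + `|a|).
Proof.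
move=> hA b /eigenvalue_shift /hA b_le.
by rewrite -[b](addrK a); apply: le_trans (ler_normB _ _) _; rewrite lerD2r.
Qed.

Lemma unitaryV P : unitary P -> adj P *m P = 1%:M.
Proof. exact: mulmx1C. Qed.

Lemma psdmx_congr_diag rho (B : 'M[C]_d) j : psdmx rho -> 0 <= (adj B *m rho *m B) j j.
Proof.
move=> [_ rho_ge0]; have := rho_ge0 (col j B).
have -> : adj (col j B) = row j (adj B) by apply/matrixP=> a b; rewrite !mxE.
by rewrite -!row_mul colE mulmxA -colE !mxE.
Qed.

Lemma adj_mul_diag_ge0 (B : 'M[C]_d) j : 0 <= (adj B *m B) j j.
Proof.
rewrite !mxE; apply: sumr_ge0 => a _.
by rewrite adjE mulrC -normCK exprn_ge0.
Qed.

Lemma herm_diagonalization A : herm A ->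
  exists P, exists D : 'rV[C]_d,
    [/\ unitary P, A = adj P *m diag_mx D *m P & forall j, eigenvalue A (D 0 j)].
Proof.
move=> hA; have nA : A \is normalmx by apply/normalmxP; rewrite adj_tstar hA.
have U : unitary (spectralmx A).
  by move/unitarymxP: (spectral_unitarymx A); rewrite adj_tstar.
have eA : A = adj (spectralmx A) *m diag_mx (spectral_diag A) *m spectralmx A.
  by rewrite {1}(orthomx_spectralP nA) invmx_unitary ?spectral_unitarymx ?adj_tstar.
move: (spectralmx A) (spectral_diag A) U eA => P D U eA.
exists P, D; split => // j; apply/eigenvalueP; exists (row j P).
  rewrite {1}eA !mulmxA -row_mul U; set e := row j (1%:M : 'M[C]_d).
  have -> : e *m diag_mx D = D 0 j *: e.
    apply/matrixP=> a b; rewrite mul_mx_diag !mxE.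
    by case: (eqVneq j b) => [->|]; rewrite ?mulr1n ?mulr0n ?mul0r ?mulr0 ?mul1r ?mulr1.
  by rewrite -scalemxAl /e -row_mul mul1mx.
apply/negP => /eqP P0.
have : row j P *m adj P = row j (1%:M : 'M[C]_d) by rewrite -row_mul U.
by rewrite P0 mul0mx => /matrixP /(_ 0 j); rewrite !mxE eqxx => /eqP; rewrite eq_sym oner_eq0.
Qed.

Lemma mxtrace_diag_mul (D : 'rV[C]_d) X :
  \tr (diag_mx D *m X) = \sum_j D 0 j * X j j.
Proof. by apply: eq_bigr => j _; rewrite mul_diag_mx mxE. Qed.

Section Congruence.
Variables (rho P : 'M[C]_d).
Hypotheses (rho_density : density rho) (P_unitary : unitary P).

Lemma density_congr_diag_ge0 j : 0 <= (P *m rho *m adj P) j j.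
Proof. by have := psdmx_congr_diag (adj P) j rho_density.1; rewrite adjK. Qed.

Lemma density_congr_diag_sum : \sum_j (P *m rho *m adj P) j j = 1.
Proof.
rewrite -/(mxtrace _) mxtrace_mulC mulmxA unitaryV // mul1mx.
exact: rho_density.2.
Qed.

Lemma density_congr_diag_le1 j : (P *m rho *m adj P) j j <= 1.
Proof.
rewrite -density_congr_diag_sum (bigD1 j) //= lerDl.
by apply: sumr_ge0 => i _; exact: density_congr_diag_ge0.
Qed.

End Congruence.

Section DensityTrace.
Variable rho : 'M[C]_d.
Hypothesis rho_density : density rho.

Lemma density_tr_mul_sq_le_tr X : herm X -> \tr (rho *m (X *m X)) <= \tr (X *m X).
Proof.
move=> hX; have [P [D [U eR _]]] := herm_diagonalization rho_density.1.1.
have eD : P *m rho *m adj P = diag_mx D.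
  by rewrite eR !mulmxA U mul1mx -!mulmxA U mulmx1.
set G := P *m (X *m X) *m adj P.
have -> : \tr (rho *m (X *m X)) = \tr (diag_mx D *m G).
  by rewrite eR /G -!mulmxA mxtrace_mulC !mulmxA.
have -> : \tr (X *m X) = \tr G.
  by rewrite /G [RHS]mxtrace_mulC !mulmxA unitaryV // mul1mx.
have G_diag_ge0 j : 0 <= G j j.
  have -> : G = adj (X *m adj P) *m (X *m adj P) by rewrite /G adjM adjK hX !mulmxA.
  exact: adj_mul_diag_ge0.
rewrite mxtrace_diag_mul; apply: ler_sum => j _.
rewrite -[leRHS]mul1r; apply: ler_wpM2r => //.
have -> : D 0 j = (P *m rho *m adj P) j j by rewrite eD mxE eqxx mulr1n.
exact: density_congr_diag_le1.
Qed.

Lemma density_tr_mul_norm_le A c :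
  herm A -> eigen_norm_le A c -> `|\tr (rho *m A)| <= c.
Proof.
move=> hA hAc; have [P [D [U eA D_eigen]]] := herm_diagonalization hA.
have -> : \tr (rho *m A) = \tr (diag_mx D *m (P *m rho *m adj P)).
  by rewrite eA mxtrace_mulC -!mulmxA mxtrace_mulC !mulmxA.
rewrite mxtrace_diag_mul; apply: le_trans (ler_norm_sum _ _ _) _.
rewrite -[leRHS]mulr1 -(density_congr_diag_sum rho_density U) mulr_sumr.
apply: ler_sum => j _.
have w_ge0 := density_congr_diag_ge0 P rho_density j.
by rewrite normrM (ger0_norm w_ge0) ler_wpM2r // (hAc _ (D_eigen j)).
Qed.

Lemma density_tr_mul_sq_ge0 X : herm X -> 0 <= \tr (rho *m (X *m X)).
Proof.
move=> hX; rewrite mulmxA mxtrace_mulC mulmxA -{1}hX.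
by apply: sumr_ge0 => j _; exact: psdmx_congr_diag rho_density.1.
Qed.

Lemma density_tr_mul_shift X a : \tr (rho *m (X - a%:M)) = \tr (rho *m X) - a.
Proof.
rewrite mulmxBr mxtraceD mul_mx_scalar -scaleN1r !mxtraceZ rho_density.2.
by rewrite mulr1 mulN1r.
Qed.

(* The variance tr(rho (X - t)^2), t = tr(rho X), is nonnegative. *)
Lemma sqr_density_tr_mul_le X : herm X ->
  (\tr (rho *m X)) ^+ 2 <= \tr (rho *m (X *m X)).
Proof.
move=> hX; set t := \tr (rho *m X).
have t_real : t \is Num.real by apply: mxtrace_herm_mul_real rho_density.1.1 hX.
have := density_tr_mul_sq_ge0 (hermB_scalar t_real hX).
have -> : (X - t%:M) *m (X - t%:M) = X *m X + (- (t + t)) *: X + (t * t)%:M.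
  rewrite mulmxBl !mulmxBr mul_mx_scalar mul_scalar_mx scalar_mxM.
  by rewrite opprB addrA addrAC scaleNr scalerDl opprD addrA.
rewrite !mulmxDr !mxtraceD -scalemxAr mxtraceZ -/t mul_mx_scalar mxtraceZ.
rewrite rho_density.2 mulr1 expr2.
set u := \tr _; have -> : u + - (t + t) * t + t * t = u - t * t by ring.
by rewrite subr_ge0.
Qed.

Lemma norm_density_tr_mul_expn2_le X j : herm X ->
  `|\tr (rho *m X)| ^+ (2 ^ j.+1) <= \tr (rho *m X ^+ (2 ^ j.+1)).
Proof.
move=> hX; elim: j => [|j IH].
  rewrite expn1 real_normK; first exact: sqr_density_tr_mul_le.
  exact: mxtrace_herm_mul_real rho_density.1.1 hX.
have -> : X ^+ (2 ^ j.+2) = X ^+ (2 ^ j.+1) *m X ^+ (2 ^ j.+1).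
  by rewrite mulmxE -exprD expnS mul2n addnn.
apply: le_trans (sqr_density_tr_mul_le (hermX _ hX)).
rewrite [in leLHS]expnS mulnC exprM ler_pXn2r ?nnegrE ?exprn_ge0 //.
by apply: le_trans IH; rewrite exprn_ge0.
Qed.

Lemma norm_density_tr_mul_expn2_le_tr X j : herm X ->
  `|\tr (rho *m X)| ^+ (2 ^ j.+1) <= \tr (X ^+ (2 ^ j.+1)).
Proof.
move=> hX; apply: le_trans (norm_density_tr_mul_expn2_le j hX) _.
have -> : X ^+ (2 ^ j.+1) = X ^+ (2 ^ j) *m X ^+ (2 ^ j).
  by rewrite mulmxE -exprD expnS mul2n addnn.
exact/density_tr_mul_sq_le_tr/hermX.
Qed.

End DensityTrace.
End Density.

Section OperatorNorm.
Variables (C : numClosedFieldType) (d : nat).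
Implicit Types (X Y : 'M[C]_d).

Definition opnorm_le X (c : C) := forall v : 'cV[C]_d,
  (adj (X *m v) *m (X *m v)) 0 0 <= c ^+ 2 * (adj v *m v) 0 0.

Lemma adj_mul_self (z : 'cV[C]_d) : (adj z *m z) 0 0 = \sum_a `|z a 0| ^+ 2.
Proof. by rewrite mxE; apply: eq_bigr => a _; rewrite adjE mulrC normCK. Qed.

Lemma opnorm_le1 : opnorm_le 1%:M 1.
Proof. by move=> v; rewrite mul1mx expr1n mul1r. Qed.

Lemma opnorm_leM X Y a b : 0 <= a ->
  opnorm_le X a -> opnorm_le Y b -> opnorm_le (X *m Y) (a * b).
Proof.
move=> a_ge0 hX hY v; rewrite -mulmxA; apply: le_trans (hX _) _.
by rewrite exprMn -[in leRHS]mulrA ler_wpM2l ?exprn_ge0.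
Qed.

Lemma opnorm_le_prod m (B : 'I_m -> 'M[C]_d) c : 0 <= c ->
  (forall j, opnorm_le (B j) c) -> opnorm_le (\prod_(j < m) B j) (c ^+ m).
Proof.
move=> c_ge0; elim: m B => [|m IH] B hB; first by rewrite big_ord0 expr0; exact: opnorm_le1.
rewrite big_ord_recr /= exprSr -mulmxE.
by apply: opnorm_leM; [exact: exprn_ge0 | exact: IH | exact: hB].
Qed.

Lemma opnorm_le_tr X c : 0 <= c -> opnorm_le X c -> `|\tr X| <= d%:R * c.
Proof.
move=> c_ge0 hX; apply: le_trans (ler_norm_sum _ _ _) _.
rewrite -[d in d%:R]card_ord mulr_natl -sumr_const; apply: ler_sum => j _.
pose e : 'cV[C]_d := delta_mx j 0.
have e_unit : (adj e *m e) 0 0 = 1.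
  rewrite adj_mul_self (bigD1 j) //= big1 ?addr0 ?mxE ?eqxx ?normr1 ?expr1n //.
  by move=> a /negPf aj; rewrite mxE aj normr0 expr0n.
have Xe a : (X *m e) a 0 = X a j by rewrite /e -colE mxE.
rewrite -(@ler_pXn2r _ 2) ?nnegrE //; have := hX e; rewrite e_unit mulr1; apply: le_trans.
by rewrite adj_mul_self (bigD1 j) //= Xe lerDl sumr_ge0 // => a _; rewrite exprn_ge0.
Qed.

Lemma herm_opnorm_le X c : 0 <= c -> herm X -> eigen_norm_le X c -> opnorm_le X c.
Proof.
move=> c_ge0 hX hXc v; have [P [D [U eX D_eigen]]] := herm_diagonalization hX.
set w := P *m v.
have -> : X *m v = adj P *m (diag_mx D *m w) by rewrite eX !mulmxA.
rewrite adjM adjK -mulmxA [P *m _]mulmxA U mul1mx.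
have -> : adj v *m v = adj w *m w.
  by rewrite /w adjM -mulmxA [adj P *m _]mulmxA unitaryV // mul1mx.
rewrite !adj_mul_self mulr_sumr; apply: ler_sum => a _.
rewrite mul_diag_mx mxE normrM exprMn ler_wpM2r ?exprn_ge0 //.
by rewrite ler_pXn2r ?nnegrE // (hXc _ (D_eigen a)).
Qed.

End OperatorNorm.

Lemma exprn_sum_ffun (T : pzRingType) k m (x : 'I_k -> T) :
  (\sum_i x i) ^+ m = \sum_(s : {ffun 'I_m -> 'I_k}) \prod_(j < m) x (s j).
Proof. by rewrite -[m in _ ^+ m]card_ord -prodr_const; exact: bigA_distr_bigA. Qed.

Definition bsign (C : pzRingType) (b : bool) : C := if b then 1 else -1.

Lemma sum_prod_bsign_ge0 (C : numDomainType) k m (s : {ffun 'I_m -> 'I_k}) :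
  0 <= \sum_(y : {ffun 'I_k -> bool}) \prod_(j < m) bsign C (y (s j)).
Proof.
have regroup (y : {ffun 'I_k -> bool}) : \prod_(j < m) bsign C (y (s j)) =
    \prod_(i < k) bsign C (y i) ^+ #|[pred j | s j == i]|.
  rewrite (partition_big s predT) //=; apply: eq_bigr => i _.
  by rewrite (eq_bigr (fun _ => bsign C (y i))) ?prodr_const // => j /eqP ->.
rewrite (eq_bigr _ (fun y _ => regroup y)).
rewrite -(bigA_distr_bigA (fun i b => bsign C b ^+ #|[pred j | s j == i]|)).
apply: prodr_ge0 => i _; rewrite big_bool /= expr1n -signr_odd.
by case: (odd _); rewrite ?expr1 ?expr0 ?subrr // addr_ge0 // ler01.
Qed.

Definition sign_moment (C : pzRingType) k m : C :=
  \sum_(y : {ffun 'I_k -> bool}) (\sum_i bsign C (y i)) ^+ m.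

Section SignedSumMoments.
Variables (C : numClosedFieldType) (d : nat).

Lemma prodmxZ m (c : 'I_m -> C) (B : 'I_m -> 'M[C]_d) :
  \prod_(j < m) (c j *: B j) = (\prod_(j < m) c j) *: \prod_(j < m) B j.
Proof.
elim: m c B => [|m IH] c B; first by rewrite !big_ord0 scale1r.
by rewrite !big_ord_recr /= IH -!mulmxE -scalemxAl -scalemxAr scalerA.
Qed.

(* In the expansion of the m-th power, the word [A (s 0) ... A (s m.-1)] carries the
   weight of [sum_prod_bsign_ge0], which does not depend on [A]. *)
Lemma signed_sum_tr_moment_le k m (A : 'I_k -> 'M[C]_d) (c : C) : 0 <= c ->
  (forall i, opnorm_le (A i) c) ->
  `|\sum_(y : {ffun 'I_k -> bool}) \tr ((\sum_i bsign C (y i) *: A i) ^+ m)|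
    <= d%:R * c ^+ m * sign_moment C k m.
Proof.
move=> c_ge0 hA.
have expand (y : {ffun 'I_k -> bool}) :
  \tr ((\sum_i bsign C (y i) *: A i) ^+ m) =
  \sum_(s : {ffun 'I_m -> 'I_k})
    (\prod_(j < m) bsign C (y (s j))) * \tr (\prod_(j < m) A (s j)).
  rewrite exprn_sum_ffun (big_morph _ (@mxtraceD _ _) (mxtrace0 _ _)).
  by apply: eq_bigr => s _; rewrite prodmxZ mxtraceZ.
rewrite (eq_bigr _ (fun y _ => expand y)) exchange_big /=.
have -> : sign_moment C k m = \sum_(s : {ffun 'I_m -> 'I_k})
    \sum_(y : {ffun 'I_k -> bool}) \prod_(j < m) bsign C (y (s j)).
  by rewrite exchange_big /=; apply: eq_bigr => y _; rewrite exprn_sum_ffun.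
rewrite mulr_sumr; apply: le_trans (ler_norm_sum _ _ _) _.
apply: ler_sum => s _; rewrite -mulr_suml normrM.
rewrite (ger0_norm (sum_prod_bsign_ge0 _ _)) mulrC ler_wpM2r ?sum_prod_bsign_ge0 //.
by apply: opnorm_le_tr; [exact: exprn_ge0 | exact: opnorm_le_prod].
Qed.

End SignedSumMoments.

Lemma bin_double_le j l : ('C(j.*2, l.*2) <= 'C(j, l) * (j.*2) ^ l)%N.
Proof.
elim: l => [|l IH]; first by rewrite !bin0 expn0.
have bin_double_step : ((l.*2.+1) * (l.*2.+2) * 'C(j.*2, (l.+1).*2) =
          (j.*2 - l.*2.+1) * (j.*2 - l.*2) * 'C(j.*2, l.*2))%N.
  rewrite doubleS -mulnA mul_bin_left mulnCA mul_bin_left mulnA; ring.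
have bin_step : (l.+1 * 'C(j, l.+1) = (j - l) * 'C(j, l))%N by rewrite mul_bin_left.
rewrite -(@leq_pmul2l (l.*2.+1 * l.*2.+2)) // bin_double_step.
apply: leq_trans (_ : (j.*2 - l.*2.+1) * (j.*2 - l.*2) * ('C(j, l) * j.*2 ^ l) <= _)%N.
  by rewrite leq_mul2l IH orbT.
have -> : (l.*2.+1 * l.*2.+2 * ('C(j, l.+1) * j.*2 ^ l.+1) =
           l.*2.+1 * 2 * (l.+1 * 'C(j, l.+1)) * j.*2 * j.*2 ^ l)%N.
  by rewrite expnS -!addnn; ring.
rewrite bin_step.
have -> : (l.*2.+1 * 2 * ((j - l) * 'C(j, l)) * j.*2 * j.*2 ^ l =
   (l.*2.+1 * 2 * (j - l) * j.*2) * ('C(j, l) * j.*2 ^ l))%N by ring.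
rewrite leq_mul2r; apply/orP; right.
have [jl|lj] := leqP j l.
  have -> : (j.*2 - l.*2 = 0)%N by lia.
  by rewrite muln0.
have -> : (j.*2 - l.*2 = 2 * (j - l))%N by lia.
have -> : (l.*2.+1 * 2 * (j - l) * j.*2 = l.*2.+1 * j.*2 * (2 * (j - l)))%N by ring.
by rewrite leq_mul2r; apply/orP; right; lia.
Qed.

Definition ffun_cons (T : Type) k (b : T) (z : {ffun 'I_k -> T}) : {ffun 'I_k.+1 -> T} :=
  [ffun i => if unlift ord0 i is Some j then z j else b].

Lemma sum_ffun_cons (T : finType) (V : nmodType) k (F : {ffun 'I_k.+1 -> T} -> V) :
  \sum_y F y = \sum_(b : T) \sum_(z : {ffun 'I_k -> T}) F (ffun_cons b z).
Proof.
rewrite pair_big /= (reindex (fun p : T * _ => ffun_cons p.1 p.2)) //=.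
exists (fun y : {ffun 'I_k.+1 -> T} => (y ord0, [ffun j => y (lift ord0 j)])).
  move=> [b z] _ /=; congr (_, _); first by rewrite ffunE unlift_none.
  by apply/ffunP => j; rewrite !ffunE liftK.
move=> y _ /=; apply/ffunP => i; rewrite !ffunE.
by case: unliftP => [j ->|->]; rewrite ?ffunE.
Qed.

Lemma sum_ord_double (V : nmodType) j (f : nat -> V) :
  \sum_(l < (j.*2).+1) f l = \sum_(l < j.+1) f (l.*2) + \sum_(l < j) f (l.*2.+1).
Proof.
elim: j => [|j IH]; first by rewrite !big_ord_recr !big_ord0 /= !add0r addr0.
rewrite doubleS (big_ord_recr j.*2.+2) (big_ord_recr j.*2.+1) /= IH.
rewrite (big_ord_recr j.+1) (big_ord_recr j) /= doubleS -!addrA; congr (_ + _).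
rewrite [in RHS](big_ord_recr j) /=; congr (_ + _).
by rewrite [LHS]addrA [LHS]addrC.
Qed.

Section SignMoment.
Variable C : numDomainType.

Lemma sign_moment0 m : sign_moment C 0 m = 0 ^+ m.
Proof.
rewrite /sign_moment (eq_bigr (fun _ => 0 ^+ m)) => [|y _]; last by rewrite big_ord0.
by rewrite sumr_const card_ffun card_ord expn0 mulr1n.
Qed.

Lemma sign_momentS k m : sign_moment C k.+1 m =
  \sum_(l < m.+1) (1 + (-1) ^+ l) * sign_moment C k (m - l) *+ 'C(m, l).
Proof.
rewrite /sign_moment sum_ffun_cons big_bool /=.
have sum_cons b (z : {ffun 'I_k -> bool}) :
  \sum_(i < k.+1) bsign C (ffun_cons b z i) = \sum_i bsign C (z i) + bsign C b.
  rewrite big_ord_recl addrC ffunE unlift_none; congr (_ + _).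
  by apply: eq_bigr => i _; rewrite ffunE liftK.
rewrite (eq_bigr _ (fun z _ => congr1 (fun x => x ^+ m) (sum_cons true z))).
rewrite (eq_bigr _ (fun z _ => congr1 (fun x => x ^+ m) (sum_cons false z))).
rewrite -big_split /=.
have binomial (z : {ffun 'I_k -> bool}) :
  (\sum_i bsign C (z i) + 1) ^+ m + (\sum_i bsign C (z i) - 1) ^+ m =
  \sum_(l < m.+1) (1 + (-1) ^+ l) * (\sum_i bsign C (z i)) ^+ (m - l) *+ 'C(m, l).
  rewrite !exprDn -big_split /=; apply: eq_bigr => l _.
  by rewrite -mulrnDl expr1n mulr1 mulrDl mul1r mulrC.
rewrite (eq_bigr _ (fun z _ => binomial z)) exchange_big /=; apply: eq_bigr => l _.
by rewrite mulr_sumr sumrMnl.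
Qed.

Lemma sign_moment_double k j : sign_moment C k.+1 j.*2 =
  \sum_(l < j.+1) 2%:R * sign_moment C k (j - l).*2 *+ 'C(j.*2, l.*2).
Proof.
rewrite sign_momentS (sum_ord_double j
  (fun l => (1 + (-1) ^+ l) * sign_moment C k (j.*2 - l) *+ 'C(j.*2, l))).
rewrite [X in _ + X]big1 ?addr0 => [|l _]; last first.
  by rewrite -signr_odd /= odd_double /= expr1 subrr mul0r mul0rn.
by apply: eq_bigr => l _; rewrite -signr_odd odd_double expr0 doubleB.
Qed.

Lemma sign_moment_le q k j : (j <= q)%N ->
  sign_moment C k j.*2 <= (2 ^ k * (q.*2 * k) ^ j)%N%:R.
Proof.
elim: k j => [|k IH] j jq.
  rewrite sign_moment0 muln0; case: j jq => [|j] _; first by rewrite expr0 expn0.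
  by rewrite expr0n /= exp0n.
rewrite sign_moment_double.
apply: le_trans (_ : \sum_(l < j.+1)
    (2 * (2 ^ k * (q.*2 * k) ^ (j - l)) * 'C(j.*2, l.*2))%N%:R <= _).
  apply: ler_sum => l _; rewrite !natrM mulrnAl -mulr_natr ler_wpM2r //.
  by rewrite mul1r -mulr_natl ler_wpM2l // -natrM IH //; lia.
rewrite -natr_sum ler_nat.
apply: leq_trans (_ : \sum_(l < j.+1)
    2 ^ k.+1 * ('C(j, l) * ((q.*2 * k) ^ (j - l) * q.*2 ^ l)) <= _)%N.
  apply: leq_sum => l _.
  have binq : ('C(j.*2, l.*2) <= 'C(j, l) * q.*2 ^ l)%N.
    apply: leq_trans (bin_double_le j l) _; rewrite leq_mul2l; apply/orP; right.
    by case: (nat_of_ord l) => [|e] //; rewrite leq_exp2r // leq_double.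
  set Z := ((q.*2 * k) ^ (j - l))%N.
  have -> : (2 * (2 ^ k * Z) * 'C(j.*2, l.*2) = (2 * 2 ^ k * Z) * 'C(j.*2, l.*2))%N by ring.
  have -> : (2 ^ k.+1 * ('C(j, l) * (Z * q.*2 ^ l)) =
             (2 * 2 ^ k * Z) * ('C(j, l) * q.*2 ^ l))%N by rewrite expnS; ring.
  by rewrite leq_mul2l binq orbT.
by rewrite -big_distrr /= -expnDn mulnSr.
Qed.

End SignMoment.

Section SignedSeparation.
Variables (C : numClosedFieldType) (d k : nat).
Variable rho : {ffun 'I_k -> bool} -> 'M[C]_d.
Variable A : 'I_k -> 'M[C]_d.
Variables c g : C.
Hypothesis rho_density : forall y, density (rho y).
Hypothesis A_herm : forall i, herm (A i).
Hypothesis A_opnorm : forall i, opnorm_le (A i) c.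
Hypothesis c_ge0 : 0 <= c.
Hypothesis g_ge0 : 0 <= g.
Hypothesis separated : forall (y : {ffun 'I_k -> bool}) i,
  g <= bsign C (y i) * \tr (rho y *m A i).

Let signed_sum (y : {ffun 'I_k -> bool}) := \sum_i bsign C (y i) *: A i.

Lemma signed_sum_herm y : herm (signed_sum y).
Proof.
apply: herm_sum => i _; apply: hermZ => //.
by case: (y i); rewrite /bsign ?realN real1.
Qed.

Lemma tr_signed_sum_ge y : k%:R * g <= \tr (rho y *m signed_sum y).
Proof.
rewrite mulmx_sumr (big_morph _ (@mxtraceD _ _) (mxtrace0 _ _)).
rewrite -[k in k%:R]card_ord mulr_natl -sumr_const; apply: ler_sum => i _.
by rewrite -scalemxAr mxtraceZ; exact: separated.
Qed.

Lemma tr_signed_sum_moment_ge y j :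
  (k%:R * g) ^+ (2 ^ j.+1) <= \tr (signed_sum y ^+ (2 ^ j.+1)).
Proof.
have kg_ge0 : 0 <= k%:R * g by rewrite mulr_ge0.
apply: le_trans (norm_density_tr_mul_expn2_le_tr (rho_density y) j (signed_sum_herm y)).
rewrite ler_pXn2r ?nnegrE ?expn_gt0 //.
have kg_le := tr_signed_sum_ge y.
exact: le_trans kg_le (real_ler_norm (ger0_real (le_trans kg_ge0 kg_le))).
Qed.

Lemma separation_moment_le j :
  (k%:R * g) ^+ (2 ^ j).*2 * (2 ^ k)%:R <=
    d%:R * c ^+ (2 ^ j).*2 * (2 ^ k * ((2 ^ j).*2 * k) ^ 2 ^ j)%:R.
Proof.
have e : (2 ^ j).*2 = (2 ^ j.+1)%N by rewrite expnS mul2n.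
have lower : (k%:R * g) ^+ (2 ^ j).*2 * (2 ^ k)%:R <=
    \sum_y \tr (signed_sum y ^+ (2 ^ j).*2).
  have -> : (2 ^ k)%N = #|{ffun 'I_k -> bool}| by rewrite card_ffun card_bool card_ord.
  rewrite mulr_natr -sumr_const.
  by apply: ler_sum => y _; rewrite e tr_signed_sum_moment_ge.
apply: le_trans (lower) _; apply: le_trans (real_ler_norm _) _.
  apply/ger0_real/(le_trans _ lower).
  by rewrite mulr_ge0 ?ler0n ?exprn_ge0 ?mulr_ge0.
apply: le_trans (signed_sum_tr_moment_le _ c_ge0 A_opnorm) _.
by rewrite ler_wpM2l ?mulr_ge0 ?ler0n ?exprn_ge0 ?sign_moment_le.
Qed.

Lemma separation_bound j : (d <= 2 ^ 2 ^ j)%N ->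
  k%:R * g ^+ 2 <= 4%:R * (2 ^ j)%:R * c ^+ 2.
Proof.
set q := (2 ^ j)%N => dq; have q_gt0 : (0 < q)%N by rewrite expn_gt0.
have := separation_moment_le j; rewrite -/q; set G := k%:R * g => moment.
have G2_le : G ^+ 2 <= 2%:R * c ^+ 2 * (q.*2 * k)%:R.
  have two_k_gt0 : (0 : C) < (2 ^ k)%:R by rewrite ltr0n expn_gt0.
  rewrite -(ler_pXn2r q_gt0) ?nnegrE ?mulr_ge0 ?exprn_ge0 ?ler0n //.
  rewrite -exprM mul2n -(ler_pM2r two_k_gt0); apply: le_trans moment _.
  have -> : (2%:R * c ^+ 2 * (q.*2 * k)%:R) ^+ q * (2 ^ k)%:R =
      (2 ^ q)%:R * c ^+ q.*2 * (2 ^ k * (q.*2 * k) ^ q)%:R.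
    by rewrite -addnn exprD !(natrM, natrX) !exprMn; ring.
  by rewrite -!mulrA ler_wpM2r ?ler_nat ?mulr_ge0 ?exprn_ge0 ?ler0n.
have [-> | k_gt0] := posnP k.
  by rewrite mul0r mulr_ge0 ?exprn_ge0 ?mulr_ge0 ?ler0n.
have k_pos : (0 : C) < k%:R by rewrite ltr0n.
rewrite -(ler_pM2l k_pos).
have -> : k%:R * (k%:R * g ^+ 2) = G ^+ 2 by rewrite /G; ring.
have -> : k%:R * (4%:R * q%:R * c ^+ 2) = 2%:R * c ^+ 2 * (q.*2 * k)%:R.
  by rewrite -mul2n !natrM; ring.
exact: G2_le.
Qed.

End SignedSeparation.

Lemma real_norm_sandwich (C : numDomainType) (a g L t0 t1 : C) :
  a \is Num.real -> 0 <= g -> `|t0| <= L -> `|t1| <= L ->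
  t0 <= a - g -> a + g <= t1 -> `|a| <= L - g.
Proof.
move=> a_real g_ge0 t0_le t1_le t0_le_ag ag_le_t1.
have g_real : g \is Num.real by exact: ger0_real.
have t0_real : t0 \is Num.real by rewrite (ler_real t0_le_ag) rpredB.
have t1_real : t1 \is Num.real by rewrite -(ler_real ag_le_t1) rpredD.
have := real_lerNnormlW t0_real t0_le; have := real_ler_normlW t1_real t1_le.
rewrite real_ler_norml // => t1_leL Lt0_le; apply/andP; split.
- by rewrite opprB addrC -lerBrDr (le_trans Lt0_le).
- by rewrite lerBrDr (le_trans ag_le_t1).
Qed.

Lemma expn_up_log2_le n : (0 < n)%N -> (2 ^ up_log 2 n <= n.*2)%N.
Proof.
move=> n_gt0; have [n_le1|n_gt1] := leqP n 1.
  have /eqP -> : up_log 2 n == 0%N by rewrite up_log_eq0 n_le1 orbT.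
  by rewrite expn0 -(addnn n); lia.
have := @up_log_bounds 2 n isT n_gt1; have := up_log_gt0 2 n; rewrite n_gt1 /=.
case: (up_log 2 n) => // J _ /andP [/ltnW J_le _].
by rewrite expnS mul2n leq_double.
Qed.

Local Open Scope complex_scope.

Section QubitObservables.
Variables (R : realType) (k n : nat).
Hypothesis n_gt0 : (0 < n)%N.
Hypothesis k_gt0 : (0 < k)%N.
Variable rho : {ffun 'I_k -> bool} -> 'M[R[i]]_(2 ^ n).
Hypothesis rho_density : forall y, density_matrix (rho y).
Variables (O : 'I_k -> 'M[R[i]]_(2 ^ n)) (alpha : 'I_k -> R) (gamma : R).
Hypothesis O_herm : forall i, is_hermitian (O i).
Hypothesis gamma_gt0 : 0 < gamma.
Hypothesis below : forall (y : {ffun 'I_k -> bool}) i,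
  y i = false -> \tr (rho y *m O i) <= (alpha i - gamma)%:C.
Hypothesis above : forall (y : {ffun 'I_k -> bool}) i,
  y i = true -> (alpha i + gamma)%:C <= \tr (rho y *m O i).
Variables (N : 'I_k -> R) (L : R).
Hypothesis O_norm : forall i, is_spec_norm (O i) (N i).
Hypothesis N_le : forall i, N i <= L.

Lemma observable_eigen_norm_le i : eigen_norm_le (O i) L%:C.
Proof. by move=> a /(O_norm i).2 /le_trans; apply; rewrite lecR. Qed.

Lemma alpha_norm_le i : `|(alpha i)%:C| <= (L - gamma)%:C.
Proof.
have tr_le y :=
  density_tr_mul_norm_le (rho_density y) (O_herm i) (@observable_eigen_norm_le i).
rewrite rmorphB.
apply: real_norm_sandwich (tr_le [ffun => false]) (tr_le [ffun => true]) _ _.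
- by apply/complex_realP; exists (alpha i).
- by rewrite lecR ltW.
- by rewrite -rmorphB; apply: below; rewrite ffunE.
- by rewrite -rmorphD; apply: above; rewrite ffunE.
Qed.

Let shifted i := O i - ((alpha i)%:C)%:M.

Lemma shifted_herm i : herm (shifted i).
Proof. by apply: hermB_scalar (O_herm i); apply/complex_realP; exists (alpha i). Qed.

Lemma gamma_le_L : gamma <= L.
Proof.
have := le_trans (normr_ge0 _) (alpha_norm_le (Ordinal k_gt0)).
by rewrite lecR subr_ge0.
Qed.

Lemma shifted_opnorm_le i : opnorm_le (shifted i) (L + L)%:C.
Proof.
have L_ge0 : 0 <= L := le_trans (ltW gamma_gt0) gamma_le_L.
apply: herm_opnorm_le (shifted_herm i) _; first by rewrite lecR addr_ge0.
move=> a /(eigen_norm_le_shift (@observable_eigen_norm_le i)) /le_trans; apply.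
by rewrite rmorphD lerD2l (le_trans (alpha_norm_le i)) // lecR gerBl ltW.
Qed.

Lemma shifted_separated (y : {ffun 'I_k -> bool}) i :
  gamma%:C <= bsign _ (y i) * \tr (rho y *m shifted i).
Proof.
rewrite (density_tr_mul_shift (rho_density y)).
case yi : (y i); rewrite /bsign ?mul1r ?mulN1r.
  by rewrite lerBrDr addrC -rmorphD; exact: above.
by rewrite opprB lerBrDr -lerBrDl -rmorphB; exact: below.
Qed.

Lemma qubit_observables_bound : k%:R * gamma ^+ 2 <= 32%:R * n%:R * L ^+ 2.
Proof.
have L_ge0 : 0 <= L := le_trans (ltW gamma_gt0) gamma_le_L.
have c_ge0 : 0 <= (L + L)%:C by rewrite lecR addr_ge0.
have g_ge0 : 0 <= gamma%:C by rewrite lecR ltW.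
have d_le : (2 ^ n <= 2 ^ 2 ^ up_log 2 n)%N by rewrite leq_exp2l ?up_logP.
have := separation_bound rho_density shifted_herm shifted_opnorm_le c_ge0 g_ge0
  shifted_separated d_le.
rewrite -!rmorphXn -!(rmorph_nat (real_complex R)) -!rmorphM lecR.
move/le_trans; apply; have -> : (L + L) ^+ 2 = 4%:R * L ^+ 2 by ring.
rewrite mulrA -natrM ler_wpM2r ?exprn_ge0 // ler_nat.
by have := expn_up_log2_le n_gt0; lia.
Qed.

End QubitObservables.

Theorem mainTheorem1 :
  exists c : rat, 0 < c /\
  forall (R : realType) (k n : nat), (0 < n)%N -> (n < k)%N ->
  forall (rho : {ffun 'I_k -> bool} -> 'M[R[i]]_(2 ^ n)),
  (forall y, density_matrix (rho y)) ->
  forall (O : 'I_k -> 'M[R[i]]_(2 ^ n)) (alpha : 'I_k -> R) (gamma : R),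
  (forall i, is_hermitian (O i)) ->
  0 < gamma ->
  (forall (y : {ffun 'I_k -> bool}) (i : 'I_k), y i = false ->
     \tr (rho y *m O i) <= (alpha i - gamma)%:C) ->
  (forall (y : {ffun 'I_k -> bool}) (i : 'I_k), y i = true ->
     (alpha i + gamma)%:C <= \tr (rho y *m O i)) ->
  forall (N : 'I_k -> R), (forall i, is_spec_norm (O i) (N i)) ->
  let Onorm := \big[Num.max/0]_(i < k) N i in
  ratr c * k%:R <= n%:R * Onorm ^+ 2 / gamma ^+ 2.
Proof.
exists (32%:R)^-1; split; first by rewrite invr_gt0 ltr0n.
move=> R k n n_gt0 n_lt_k rho rho_density O alpha gamma O_herm gamma_gt0 below above
  N O_norm /=.
have N_le i : N i <= \big[Num.max/0]_(i < k) N i by rewrite (bigD1 i) //= le_max lexx.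
have := qubit_observables_bound n_gt0 (ltn_trans n_gt0 n_lt_k) rho_density O_herm
  gamma_gt0 below above O_norm N_le.
rewrite fmorphV /= ratr_nat ler_pdivlMr ?exprn_gt0 // -!mulrA.
set a := k%:R * _; set b := n%:R * _ => bound; lra.
Qed.
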